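(* Let $A \subseteq \mathbb{N}$ be a $D$-w.e.u. set and let $a\colon \mathbb{N}\to\mathbb{N}$ be a computable enumeration of $A$ without repetitions (i.e. $a$ is injective with image $A$). Then the deficiency set $\mathcal{D}_a = \{ s \in \mathbb{N} : \exists t > s\, [a(t) < a(s)]\}$ is effectively simple. Consequently every $D$-w.e.u. set is $T$-complete, i.e. $\mathcal{K} \leq_{\mathrm{T}} A$.
   Context: $\varphi_0, \varphi_1, \ldots$ is a standard acceptable enumeration of the partial computable functions $\mathbb{N}\to\mathbb{N}$, $\mathcal{W}_e = \operatorname{dom}\varphi_e$, $\mathcal{K} = \{e : \varphi_e(e)\text{ defined}\}$, $\mathbb{1}_A$ the characteristic function of $A$, $\overline{A}=\mathbb{N}\setminus A$, and $\leq_{\mathrm{T}}$ is Turing reducibility. $\mathfrak{P}_{\mathrm{fin}}(\mathbb{N})$ is the set of finite subsets of $\mathbb{N}$; a map $f\colon \mathbb{N}\to\mathfrak{P}_{\mathrm{fin}}(\mathbb{N})$ is computable if the map sending $e$ to a canonical index of $f(e)$ is computable. A recursively enumerable set $A$ is $D$-w.e.u. if there is a computable $f\colon \mathbb{N}\to\mathfrak{P}_{\mathrm{fin}}(\mathbb{N})$ such that for all $e$: if $\varphi_e(z)$ is defined for every $z\in f(e)$, then there is $z \in f(e)$ with $\varphi_e(z) \neq \mathbb{1}_A(z)$. A recursively enumerable set $D$ is effectively simple if there is a total computable $h\colon\mathbb{N}\to\mathbb{N}$ such that for all $e$: if $\mathcal{W}_e \subseteq \overline{D}$ then $|\mathcal{W}_e|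 \leq h(e)$. *)

(* A concrete model of (oracle) partial computable functions:
   unary partial recursive functions on nat (with Cantor pairing), given by
   an inductive program syntax, a big-step semantics relative to an oracle,
   and an injective Goedel numbering of programs. *)
From Stdlib Require Import Arith List.
From Stdlib Require Cantor.
Import ListNotations.

Definition pair (x y : nat) : nat := Cantor.to_nat (x, y).
Definition unpair (n : nat) : nat * nat := Cantor.of_nat n.

Inductive prog : Type :=
| PZero : prog
| PSucc : prog
| PProj1 : prog
| PProj2 : prog
| POracle : prog
| PPair : prog -> prog -> prog
| PComp : prog -> prog -> prog
| PPrec : prog -> prog -> prog
| PMu : prog -> prog.

Inductive evalR (o : nat -> bool) : prog -> nat -> nat -> Prop :=
| ev_zero x : evalR o PZero x 0
| ev_succ x : evalR o PSucc x (S x)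
| ev_proj1 x y : evalR o PProj1 (pair x y) x
| ev_proj2 x y : evalR o PProj2 (pair x y) y
| ev_oracle x : evalR o POracle x (if o x then 1 else 0)
| ev_pair f g x u v :
    evalR o f x u -> evalR o g x v -> evalR o (PPair f g) x (pair u v)
| ev_comp f g x u v :
    evalR o g x u -> evalR o f u v -> evalR o (PComp f g) x v
| ev_prec0 f g x y :
    evalR o f x y -> evalR o (PPrec f g) (pair x 0) y
| ev_precS f g x n z y :
    evalR o (PPrec f g) (pair x n) z ->
    evalR o g (pair x (pair n z)) y ->
    evalR o (PPrec f g) (pair x (S n)) y
| ev_mu f x n :
    evalR o f (pair x n) 0 ->
    (forall m, m < n -> exists k, k <> 0 /\ evalR o f (pair x m) k) ->
    evalR o (PMu f) x n.

Fixpoint encode (p : prog) : nat :=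
  match p with
  | PZero => 0
  | PSucc => 1
  | PProj1 => 2
  | PProj2 => 3
  | POracle => 4
  | PPair f g => 5 + 9 * pair (encode f) (encode g)
  | PComp f g => 6 + 9 * pair (encode f) (encode g)
  | PPrec f g => 7 + 9 * pair (encode f) (encode g)
  | PMu f => 8 + 9 * encode f
  end.

(* phiO o e x y : the e-th partial o-computable function maps x to y.
   Indices that code no program denote the nowhere defined function. *)
Definition phiO (o : nat -> bool) (e x y : nat) : Prop :=
  exists p, encode p = e /\ evalR o p x y.

Definition phi (e x y : nat) : Prop := phiO (fun _ => false) e x y.

Definition defined (e x : nat) : Prop := exists y, phi e x y.

Definition W (e : nat) : nat -> Prop := fun x => defined e x.

Definition K : nat -> Prop := fun e => defined e e.

Definition computable (f : nat -> nat) : Prop :=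
  exists e, forall x, phi e x (f x).

Definition re (A : nat -> Prop) : Prop :=
  exists e, forall x, A x <-> W e x.

Definition chi (A : nat -> Prop) (z v : nat) : Prop :=
  (A z /\ v = 1) \/ (~ A z /\ v = 0).

Definition canon (n z : nat) : Prop := Nat.testbit n z = true.

(* D-w.e.u. sets; a computable f : N -> P_fin(N) is given by a computable
   function fc of canonical indices, f(e) = canon (fc e). *)
Definition DWEU (A : nat -> Prop) : Prop :=
  re A /\
  exists fc : nat -> nat, computable fc /\
    forall e, (forall z, canon (fc e) z -> defined e z) ->
      exists z, canon (fc e) z /\ exists y, phi e z y /\ ~ chi A z y.

Definition effectively_simple (D : nat -> Prop) : Prop :=
  re D /\
  exists h : nat -> nat, computable h /\
    forall e, (forall x, W e x -> ~ D x) ->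
      exists l : list nat, length l <= h e /\ forall x, W e x -> In x l.

Definition deficiency (a : nat -> nat) : nat -> Prop :=
  fun s => exists t, s < t /\ a t < a s.

Definition Treducible (B A : nat -> Prop) : Prop :=
  exists oA : nat -> bool, (forall x, oA x = true <-> A x) /\
  exists e, forall x, exists y, phiO oA e x y /\ chi B x y.

(* Let a enumerate the D-w.e.u. set A without repetitions and let f witness that A is D-w.e.u.
   If W_e avoids the deficiency set D_a and s is in W_e, no value enumerated after stage s lies
   below a(s); so for z < a(s) the finite stage {a(0), ..., a(s)} already decides z in A.  The
   program g(e) that on input z searches such an s and answers from that stage never disagrees
   with 1_A, hence diverges somewhere on f(g(e)).  If W_e had more than F elements, F being the
   canonical index of f(g(e)), injectivity of a would give s in W_e with a(s) >= F, bounding every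
   element of f(g(e)) and making g(e) total there.  So |W_e| <= F, a computable bound in e.

   For T-completeness, let psi_x(z) wait until x enters K at some stage s and then answer whether
   z is enumerated into A within s steps.  If x is in K, psi_x is total, so f(psi_x) contains a z
   in A enumerated after stage s.  Using the oracle one computes a stage t by which every element
   of A in f(psi_x) is enumerated; then x is in K iff x enters K by stage t.

   Stages come from a Kleene normal form: the programs of the model are run by a stack machine
   whose step function is primitive recursive. *)

From Stdlib Require Import Arith Bool Wf_nat Lia List FinFun Classical ClassicalEpsilon.

Lemma unpair_pair x y : unpair (pair x y) = (x, y).
Proof. unfold unpair, pair. apply Cantor.cancel_of_to. Qed.

Lemma pair_unpair n : pair (fst (unpair n)) (snd (unpair n)) = n.
Proof. unfold unpair, pair. rewrite <- surjective_pairing. apply Cantor.cancel_to_of. Qed.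

Lemma pair_inj x y x' y' : pair x y = pair x' y' -> x = x' /\ y = y'.
Proof. intro H. apply (f_equal unpair) in H. rewrite !unpair_pair in H. now inversion H. Qed.

Lemma pair_surj n : exists a b, n = pair a b.
Proof. exists (fst (unpair n)), (snd (unpair n)). symmetry. apply pair_unpair. Qed.

Lemma pair_ge x y : x + y <= pair x y.
Proof. unfold pair. pose proof (Cantor.to_nat_non_decreasing x y). lia. Qed.

Lemma fst_pair x y : fst (unpair (pair x y)) = x.
Proof. now rewrite unpair_pair. Qed.

Lemma snd_pair x y : snd (unpair (pair x y)) = y.
Proof. now rewrite unpair_pair. Qed.

Ltac simpl_pair := repeat (progress (rewrite ?unpair_pair; cbn [fst snd])).

Lemma evalR_proj1 o x : evalR o PProj1 x (fst (unpair x)).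
Proof. rewrite <- (pair_unpair x) at 1. constructor. Qed.

Lemma evalR_proj2 o x : evalR o PProj2 x (snd (unpair x)).
Proof. rewrite <- (pair_unpair x) at 1. constructor. Qed.

(** * Primitive recursive expressions *)

Inductive fexp : Type :=
| EZero | ESucc | EFst | ESnd | EOrc
| EPair (a b : fexp) | EComp (a b : fexp) | EPrec (a b : fexp).

Notation "f @ g" := (EComp f g) (at level 40, left associativity).

Fixpoint compile (e : fexp) : prog :=
  match e with
  | EZero => PZero | ESucc => PSucc | EFst => PProj1 | ESnd => PProj2 | EOrc => POracle
  | EPair a b => PPair (compile a) (compile b)
  | EComp a b => PComp (compile a) (compile b)
  | EPrec a b => PPrec (compile a) (compile b)
  end.

Definition prec_iter (fa fb : nat -> nat) (x0 n : nat) : nat :=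
  nat_rect (fun _ => nat) (fa x0) (fun i z => fb (pair x0 (pair i z))) n.

Fixpoint den (o : nat -> bool) (e : fexp) (x : nat) : nat :=
  match e with
  | EZero => 0 | ESucc => S x | EFst => fst (unpair x) | ESnd => snd (unpair x)
  | EOrc => if o x then 1 else 0
  | EPair a b => pair (den o a x) (den o b x)
  | EComp a b => den o a (den o b x)
  | EPrec a b => prec_iter (den o a) (den o b) (fst (unpair x)) (snd (unpair x))
  end.

Lemma compile_correct o e x : evalR o (compile e) x (den o e x).
Proof.
  revert x; induction e; intro x; simpl.
  1-5: constructor || apply evalR_proj1 || apply evalR_proj2.
  - constructor; auto.
  - econstructor; eauto.
  - rewrite <- (pair_unpair x) at 1.
    generalize (fst (unpair x)) (snd (unpair x)). intros x0 n.
    induction n; simpl.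
    + constructor; auto.
    + econstructor; eauto.
Qed.

Fixpoint oracle_free (e : fexp) : bool :=
  match e with
  | EOrc => false
  | EPair a b | EComp a b | EPrec a b => oracle_free a && oracle_free b
  | _ => true
  end.

Lemma den_oracle_free o o' e : oracle_free e = true -> forall x, den o e x = den o' e x.
Proof.
  induction e; simpl; intros H x; try reflexivity; try discriminate;
  apply andb_prop in H; destruct H as [H1 H2].
  - now rewrite IHe1, IHe2.
  - now rewrite IHe1, IHe2.
  - unfold prec_iter. generalize (snd (unpair x)); intro n. induction n; simpl.
    + auto.
    + rewrite IHn. auto.
Qed.

Definition EId := EPair EFst ESnd.
Lemma den_Id o x : den o EId x = x.
Proof. apply pair_unpair. Qed.

Fixpoint EConst (n : nat) : fexp := match n with 0 => EZero | S n => ESucc @ EConst n end.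
Lemma den_Const o n x : den o (EConst n) x = n.
Proof. induction n; simpl; auto. Qed.

(* Inside the step expression of [EPrec] the argument is [pair x (pair i z)], [z] being the
   value at [i]. *)
Definition ERecVal := ESnd @ ESnd.
Definition ERecIdx := EFst @ ESnd.
Lemma den_ERecVal o x i z : den o ERecVal (pair x (pair i z)) = z.
Proof. unfold ERecVal. cbn [den]. simpl_pair. reflexivity. Qed.
Lemma den_ERecIdx o x i z : den o ERecIdx (pair x (pair i z)) = i.
Proof. unfold ERecIdx. cbn [den]. simpl_pair. reflexivity. Qed.

Definition EIfZ c a b := EPrec EFst (ESnd @ EFst) @ EPair (EPair a b) c.
Lemma den_IfZ o c a b x : den o (EIfZ c a b) x =
  match den o c x with 0 => den o a x | S _ => den o b x end.
Proof.
  simpl. simpl_pair. unfold prec_iter.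
  destruct (den o c x); simpl; simpl_pair; reflexivity.
Qed.

Definition EPred := EPrec EZero (EFst @ ESnd) @ EPair EZero EId.
Lemma den_Pred o x : den o EPred x = pred x.
Proof.
  unfold EPred; cbn [den]. rewrite den_Id. simpl_pair. unfold prec_iter.
  destruct x; cbn [nat_rect]; simpl_pair; reflexivity.
Qed.

Definition ESub a b := EPrec EId (EPred @ ERecVal) @ EPair a b.
Lemma den_Sub o a b x : den o (ESub a b) x = den o a x - den o b x.
Proof.
  unfold ESub; cbn [den]. simpl_pair. unfold prec_iter.
  generalize (den o a x) (den o b x). intros u v. induction v; cbn [nat_rect].
  - rewrite den_Id. lia.
  - rewrite den_Pred, den_ERecVal, IHv. lia.
Qed.

Definition EAdd a b := EPrec EId (ESucc @ ERecVal) @ EPair a b.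
Lemma den_Add o a b x : den o (EAdd a b) x = den o a x + den o b x.
Proof.
  unfold EAdd; cbn [den]. simpl_pair. unfold prec_iter.
  generalize (den o a x) (den o b x). intros u v. induction v; cbn [nat_rect].
  - rewrite den_Id. lia.
  - cbn [den]. rewrite den_ERecVal, IHv. lia.
Qed.

Definition EIfEq u v a b := EIfZ (EAdd (ESub u v) (ESub v u)) a b.
Lemma den_IfEq o u v a b x : den o (EIfEq u v a b) x =
  if den o u x =? den o v x then den o a x else den o b x.
Proof.
  unfold EIfEq. rewrite den_IfZ, den_Add, !den_Sub.
  destruct (Nat.eqb_spec (den o u x) (den o v x)).
  - replace (den o u x - den o v x + (den o v x - den o u x)) with 0 by lia. auto.
  - destruct (den o u x - den o v x + (den o v x - den o u x)) eqn:E; [lia|auto].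
Qed.

Definition EIfLe u v a b := EIfZ (ESub u v) a b.
Lemma den_IfLe o u v a b x : den o (EIfLe u v a b) x =
  if den o u x <=? den o v x then den o a x else den o b x.
Proof.
  unfold EIfLe. rewrite den_IfZ, den_Sub.
  destruct (Nat.leb_spec (den o u x) (den o v x)).
  - replace (den o u x - den o v x) with 0 by lia. auto.
  - destruct (den o u x - den o v x) eqn:E; [lia|auto].
Qed.

Fixpoint EScale (k : nat) (a : fexp) : fexp :=
  match k with 0 => EZero | S k => EAdd a (EScale k a) end.
Lemma den_Scale o k a x : den o (EScale k a) x = k * den o a x.
Proof. induction k; simpl EScale; [reflexivity|]. rewrite den_Add, IHk. lia. Qed.

Lemma divmod_S k n : k <> 0 ->
  S n / k = (if S (n mod k) =? k then S (n / k) else n / k) /\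
  S n mod k = (if S (n mod k) =? k then 0 else S (n mod k)).
Proof.
  intro Hk. pose proof (Nat.div_mod n k Hk). pose proof (Nat.mod_upper_bound n k Hk).
  destruct (Nat.eqb_spec (S (n mod k)) k).
  - split.
    + symmetry. apply (Nat.div_unique _ _ _ 0); lia.
    + symmetry. apply (Nat.mod_unique _ _ (S (n/k))); lia.
  - split.
    + symmetry. apply (Nat.div_unique _ _ _ (S (n mod k))); lia.
    + symmetry. apply (Nat.mod_unique _ _ (n/k)); lia.
Qed.

Definition EDivMod (k : nat) : fexp :=
  EPrec (EPair EZero EZero)
     (EIfEq (ESucc @ ESnd @ ERecVal) (EConst k)
        (EPair (ESucc @ EFst @ ERecVal) EZero)
        (EPair (EFst @ ERecVal) (ESucc @ ESnd @ ERecVal)))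
   @ EPair EZero EId.

Lemma den_DivMod o k x : k <> 0 -> den o (EDivMod k) x = pair (x / k) (x mod k).
Proof.
  intro Hk. unfold EDivMod. cbn [den]. rewrite den_Id. simpl_pair. unfold prec_iter.
  induction x; cbn [nat_rect].
  - cbn [den]. rewrite Nat.Div0.div_0_l, Nat.Div0.mod_0_l by auto. reflexivity.
  - rewrite den_IfEq. cbn [den]. rewrite den_Const, !den_ERecVal, IHx. simpl_pair.
    destruct (divmod_S k x Hk) as [H1 H2]. rewrite H1, H2.
    destruct (S (x mod k) =? k); reflexivity.
Qed.

Definition bit (a j : nat) : nat := (a / 2 ^ j) mod 2.

Lemma bit_le1 a j : bit a j <= 1.
Proof. unfold bit. pose proof (Nat.mod_upper_bound (a / 2 ^ j) 2). lia. Qed.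

Lemma bit_add_high_low m n j b : m < 2 ^ n -> j < n -> bit (m + b * 2 ^ n) j = bit m j.
Proof.
  intros Hm Hj. unfold bit.
  assert (E : b * 2 ^ n = (b * 2 ^ (n - j - 1)) * 2 * 2 ^ j).
  { rewrite <- !Nat.mul_assoc. f_equal.
    rewrite <- Nat.pow_succ_r', <- Nat.pow_add_r. f_equal. lia. }
  rewrite E, Nat.div_add by (apply Nat.pow_nonzero; lia).
  apply Nat.Div0.mod_add.
Qed.

Lemma bit_add_high_top m n b : m < 2 ^ n -> b <= 1 -> bit (m + b * 2 ^ n) n = b.
Proof.
  intros Hm Hb. unfold bit. rewrite Nat.div_add by (apply Nat.pow_nonzero; lia).
  rewrite Nat.div_small by auto. simpl. destruct b as [|[|]]; simpl; lia.
Qed.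

Lemma canon_bit F z : canon F z -> bit F z = 1.
Proof.
  unfold canon, bit. intro H. pose proof (Nat.testbit_spec' F z) as E. rewrite H in E.
  simpl in E. symmetry. exact E.
Qed.

Lemma canon_lt F z : canon F z -> z < F.
Proof.
  unfold canon. intro H. pose proof (Nat.testbit_spec' F z) as E. rewrite H in E. simpl in E.
  destruct (Nat.lt_ge_cases F (2 ^ z)) as [Hl|Hl].
  - rewrite Nat.div_small in E by auto. simpl in E. discriminate.
  - pose proof (Nat.pow_gt_lin_r 2 z). lia.
Qed.

Definition EShiftR := EPrec EId (EFst @ EDivMod 2 @ ERecVal).
Lemma den_ShiftR o n z : den o EShiftR (pair n z) = n / 2 ^ z.
Proof.
  unfold EShiftR. cbn [den]. simpl_pair. unfold prec_iter. induction z; cbn [nat_rect].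
  - rewrite den_Id. simpl. symmetry. apply Nat.div_1_r.
  - cbn [den]. rewrite den_ERecVal, den_DivMod by lia. simpl_pair. rewrite IHz.
    rewrite Nat.Div0.div_div. f_equal. simpl. lia.
Qed.

Definition EBit := ESnd @ EDivMod 2 @ EShiftR.
Lemma den_Bit o n z : den o EBit (pair n z) = bit n z.
Proof.
  unfold EBit, bit. cbn [den]. rewrite den_ShiftR, den_DivMod by lia. simpl_pair. reflexivity.
Qed.

Fixpoint sumto (f : nat -> nat) (n : nat) : nat :=
  match n with 0 => 0 | S n => sumto f n + f n end.

Lemma sumto_ext f g n : (forall i, f i = g i) -> sumto f n = sumto g n.
Proof. intro H. induction n; simpl; auto. Qed.

Lemma sumto_zero f n : sumto f n = 0 <-> forall i, i < n -> f i = 0.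
Proof.
  induction n; simpl; split; intros; try lia.
  - assert (i < n \/ i = n) as [|] by lia.
    + apply IHn; auto; lia.
    + subst; lia.
  - rewrite (proj2 IHn); [|intros; apply H; lia]. rewrite H; lia.
Qed.

Lemma sumto_indicator_zero (f : nat -> nat) z n :
  sumto (fun t => if f t =? z then 1 else 0) n = 0 <-> forall t, t < n -> f t <> z.
Proof.
  rewrite sumto_zero. split; intros H t Ht; specialize (H t Ht).
  - destruct (Nat.eqb_spec (f t) z); [discriminate|auto].
  - destruct (Nat.eqb_spec (f t) z); [contradiction|auto].
Qed.

Definition ESum (P : fexp) : fexp := EPrec EZero (EAdd ERecVal (P @ EPair EFst ERecIdx)).
Lemma den_Sum o P x n : den o (ESum P) (pair x n) = sumto (fun i => den o P (pair x i)) n.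
Proof.
  unfold ESum. cbn [den]. simpl_pair. unfold prec_iter. induction n; cbn [nat_rect].
  - reflexivity.
  - rewrite den_Add. cbn [den]. rewrite den_ERecVal, den_ERecIdx. simpl_pair. rewrite IHn.
    reflexivity.
Qed.

(** * A universal stack machine *)

(* A state is [pair (pair 0 (pair c x)) K] (evaluate code [c] on [x]) or [pair (pair 1 v) K]
   (return [v]); a continuation is [0] or [S (pair frame K)].  Codes that denote no program make
   the machine loop forever, as do ill-formed frames. *)
Definition kcons fr K := S (pair fr K).
Definition fr_pair1 b x := pair 0 (pair b x).
Definition fr_pair2 u := pair 1 u.
Definition fr_comp a := pair 2 a.
Definition fr_prec fa g x0 i n := pair 3 (pair fa (pair g (pair x0 (pair i n)))).
Definition fr_mu f x m := pair 4 (pair f (pair x m)).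
Definition st_eval c x K := pair (pair 0 (pair c x)) K.
Definition st_ret v K := pair (pair 1 v) K.

Definition ERetState v K := EPair (EPair (EConst 1) v) K.
Definition EEvalState c x K := EPair (EPair (EConst 0) (EPair c x)) K.
Definition EPushFrame fr K := ESucc @ EPair fr K.

Definition EStepEval : fexp :=
  let c := EFst @ ESnd @ EFst in
  let x := ESnd @ ESnd @ EFst in
  let K := ESnd in
  let r := ESnd @ EDivMod 9 @ c in
  let k := EFst @ EDivMod 9 @ c in
  let p := EFst @ k in
  let q := ESnd @ k in
  EIfLe c (EConst 4)
    (EIfEq c (EConst 0) (ERetState (EConst 0) K)
    (EIfEq c (EConst 1) (ERetState (ESucc @ x) K)
    (EIfEq c (EConst 2) (ERetState (EFst @ x) K)
    (EIfEq c (EConst 3) (ERetState (ESnd @ x) K)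
    (ERetState (EConst 0) K)))))
    (EIfEq r (EConst 5) (EEvalState p x (EPushFrame (EPair (EConst 0) (EPair q x)) K))
    (EIfEq r (EConst 6) (EEvalState q x (EPushFrame (EPair (EConst 2) p) K))
    (EIfEq r (EConst 7) (EEvalState p (EFst @ x)
        (EPushFrame (EPair (EConst 3)
                 (EPair p (EPair q (EPair (EFst @ x) (EPair (EConst 0) (ESnd @ x)))))) K))
    (EIfEq r (EConst 8) (EEvalState k (EPair x (EConst 0))
        (EPushFrame (EPair (EConst 4) (EPair k (EPair x (EConst 0)))) K))
    EId)))).

Definition EStepRet : fexp :=
  let v := ESnd @ EFst in
  let K := ESnd in
  let w := EPred @ K in
  let fr := EFst @ w in
  let K' := ESnd @ w in
  let ft := EFst @ fr in
  let d := ESnd @ fr in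
  EIfEq K (EConst 0) EId
   (EIfEq ft (EConst 0) (EEvalState (EFst @ d) (ESnd @ d) (EPushFrame (EPair (EConst 1) v) K'))
   (EIfEq ft (EConst 1) (ERetState (EPair d v) K')
   (EIfEq ft (EConst 2) (EEvalState d v K')
   (EIfEq ft (EConst 3)
      (let fa := EFst @ d in let g := EFst @ ESnd @ d in
       let x0 := EFst @ ESnd @ ESnd @ d in let i := EFst @ ESnd @ ESnd @ ESnd @ d in
       let n := ESnd @ ESnd @ ESnd @ ESnd @ d in
       EIfEq i n (ERetState v K')
         (EEvalState g (EPair x0 (EPair i v))
            (EPushFrame
               (EPair (EConst 3) (EPair fa (EPair g (EPair x0 (EPair (ESucc @ i) n))))) K')))
   (EIfEq ft (EConst 4)
      (let f := EFst @ d in let xx := EFst @ ESnd @ d in let m := ESnd @ ESnd @ d in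
       EIfEq v (EConst 0) (ERetState m K')
         (EEvalState f (EPair xx (ESucc @ m))
            (EPushFrame (EPair (EConst 4) (EPair f (EPair xx (ESucc @ m)))) K')))
   EId))))).

(* A nonzero tag is treated as a return. *)
Definition EStep : fexp :=
  EIfEq (EFst @ EFst) (EConst 0) EStepEval
    (EStepRet @ EPair (EPair (EConst 1) (ESnd @ EFst)) ESnd).

Definition step (s : nat) : nat := den (fun _ => false) EStep s.

Lemma divmod9 r k : r < 9 -> (r + 9 * k) / 9 = k /\ (r + 9 * k) mod 9 = r.
Proof.
  intro H. split.
  - symmetry. apply (Nat.div_unique _ _ _ r); lia.
  - symmetry. apply (Nat.mod_unique _ _ k); lia.
Qed.

Ltac case_tests := repeat match goal with
  | |- context [?u =? ?v] => destruct (Nat.eqb_spec u v); try (exfalso; lia)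
  | |- context [?u <=? ?v] => destruct (Nat.leb_spec u v); try (exfalso; lia)
  end.

Ltac step_rewrite :=
  cbn [den Nat.pred];
  rewrite ?den_IfEq, ?den_IfLe, ?den_Const, ?den_Id, ?den_Pred;
  try rewrite den_DivMod by lia;
  try (match goal with Hd : _ / 9 = _ |- _ => rewrite Hd end);
  try (match goal with Hm : _ mod 9 = _ |- _ => rewrite Hm end);
  simpl_pair.

Ltac step_compute :=
  unfold step, EStep, EStepEval, EStepRet, ERetState, EEvalState, EPushFrame,
    st_eval, st_ret, kcons, fr_pair1, fr_pair2, fr_comp, fr_prec, fr_mu;
  repeat progress step_rewrite;
  repeat (case_tests; step_rewrite);
  try reflexivity.

Lemma step_eval_zero x K : step (st_eval 0 x K) = st_ret 0 K.
Proof. step_compute. Qed.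
Lemma step_eval_succ x K : step (st_eval 1 x K) = st_ret (S x) K.
Proof. step_compute. Qed.
Lemma step_eval_proj1 x K : step (st_eval 2 x K) = st_ret (fst (unpair x)) K.
Proof. step_compute. Qed.
Lemma step_eval_proj2 x K : step (st_eval 3 x K) = st_ret (snd (unpair x)) K.
Proof. step_compute. Qed.
(* The machine runs with the empty oracle. *)
Lemma step_eval_oracle x K : step (st_eval 4 x K) = st_ret 0 K.
Proof. step_compute. Qed.
Lemma step_eval_pair p q x K :
  step (st_eval (5 + 9 * pair p q) x K) = st_eval p x (kcons (fr_pair1 q x) K).
Proof. destruct (divmod9 5 (pair p q)) as [Hd Hm]; [lia|]. step_compute. Qed.
Lemma step_eval_comp p q x K :
  step (st_eval (6 + 9 * pair p q) x K) = st_eval q x (kcons (fr_comp p) K).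
Proof. destruct (divmod9 6 (pair p q)) as [Hd Hm]; [lia|]. step_compute. Qed.
Lemma step_eval_prec p q x K : step (st_eval (7 + 9 * pair p q) x K) =
  st_eval p (fst (unpair x)) (kcons (fr_prec p q (fst (unpair x)) 0 (snd (unpair x))) K).
Proof. destruct (divmod9 7 (pair p q)) as [Hd Hm]; [lia|]. step_compute. Qed.
Lemma step_eval_mu f x K :
  step (st_eval (8 + 9 * f) x K) = st_eval f (pair x 0) (kcons (fr_mu f x 0) K).
Proof. destruct (divmod9 8 f) as [Hd Hm]; [lia|]. step_compute. Qed.
Lemma step_eval_invalid c x K : 4 < c -> c mod 9 < 5 -> step (st_eval c x K) = st_eval c x K.
Proof. intros H1 H2. step_compute. Qed.
Lemma step_halted v : step (st_ret v 0) = st_ret v 0.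
Proof. step_compute. Qed.
Lemma step_ret_tag t v K : t <> 0 -> step (pair (pair t v) K) = step (st_ret v K).
Proof.
  intros Ht. unfold step, EStep, st_ret. rewrite !den_IfEq. cbn [den]. rewrite !den_Const.
  simpl_pair. case_tests. reflexivity.
Qed.
Lemma step_ret_pair1 b x v K :
  step (st_ret v (kcons (fr_pair1 b x) K)) = st_eval b x (kcons (fr_pair2 v) K).
Proof. step_compute. Qed.
Lemma step_ret_pair2 u v K : step (st_ret v (kcons (fr_pair2 u) K)) = st_ret (pair u v) K.
Proof. step_compute. Qed.
Lemma step_ret_comp a v K : step (st_ret v (kcons (fr_comp a) K)) = st_eval a v K.
Proof. step_compute. Qed.
Lemma step_ret_prec_done fa g x0 n v K :
  step (st_ret v (kcons (fr_prec fa g x0 n n) K)) = st_ret v K.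
Proof. step_compute. Qed.
Lemma step_ret_prec fa g x0 i n v K : i <> n ->
  step (st_ret v (kcons (fr_prec fa g x0 i n) K)) =
  st_eval g (pair x0 (pair i v)) (kcons (fr_prec fa g x0 (S i) n) K).
Proof. intro H. step_compute. Qed.
Lemma step_ret_mu_found f x m K : step (st_ret 0 (kcons (fr_mu f x m) K)) = st_ret m K.
Proof. step_compute. Qed.
Lemma step_ret_mu_next f x m v K : v <> 0 ->
  step (st_ret v (kcons (fr_mu f x m) K)) = st_eval f (pair x (S m)) (kcons (fr_mu f x (S m)) K).
Proof. intro H. step_compute. Qed.
Lemma step_ret_invalid t d v K : 4 < t ->
  step (st_ret v (kcons (pair t d) K)) = st_ret v (kcons (pair t d) K).
Proof. intro H. step_compute. Qed.

Fixpoint run (n s : nat) : nat := match n with 0 => s | S n => run n (step s) end.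

Lemma run_S n s : run (S n) s = step (run n s).
Proof. revert s; induction n; intro s; simpl; auto. rewrite <- IHn. reflexivity. Qed.

Lemma run_add n m s : run (n + m) s = run m (run n s).
Proof. revert s; induction n; intro s; simpl; auto. Qed.

Lemma run_halted n v : run n (st_ret v 0) = st_ret v 0.
Proof. induction n; simpl; auto. rewrite step_halted. auto. Qed.

Lemma run_mono n m s v : run n s = st_ret v 0 -> n <= m -> run m s = st_ret v 0.
Proof.
  intros H Hm. replace m with (n + (m - n)) by lia. rewrite run_add, H. apply run_halted.
Qed.

Lemma encode_inj p q : encode p = encode q -> p = q.
Proof.
  revert q; induction p; destruct q; simpl; intro H; try lia; try reflexivity;
  try (assert (E: pair (encode p1) (encode p2) = pair (encode q1) (encode q2)) by lia;
       apply pair_inj in E; destruct E as [E1 E2]; f_equal; auto).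
  f_equal. apply IHp. lia.
Qed.

Lemma phiO_enc o p x y : phiO o (encode p) x y <-> evalR o p x y.
Proof.
  split.
  - intros [q [Hq H]]. apply encode_inj in Hq. now subst.
  - intro H. exists p. auto.
Qed.

Definition is_code (c : nat) : Prop := exists p, encode p = c.

Lemma phi_is_code c x y : phi c x y -> is_code c.
Proof. intros [p [Hp _]]. exists p; auto. Qed.

Lemma phi_zero x : phi 0 x 0.
Proof. exists PZero. split; [reflexivity|constructor]. Qed.
Lemma phi_succ x : phi 1 x (S x).
Proof. exists PSucc. split; [reflexivity|constructor]. Qed.
Lemma phi_proj1 x : phi 2 x (fst (unpair x)).
Proof. exists PProj1. split; [reflexivity|apply evalR_proj1]. Qed.
Lemma phi_proj2 x : phi 3 x (snd (unpair x)).
Proof. exists PProj2. split; [reflexivity|apply evalR_proj2]. Qed.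
Lemma phi_oracle x : phi 4 x 0.
Proof. exists POracle. split; [reflexivity|]. exact (ev_oracle _ x). Qed.

Lemma phi_pair p q x u v : phi p x u -> phi q x v -> phi (5 + 9 * pair p q) x (pair u v).
Proof.
  intros [P [<- HP]] [Q [<- HQ]]. exists (PPair P Q). split; [reflexivity|]. constructor; auto.
Qed.
Lemma phi_comp p q x u w : phi q x u -> phi p u w -> phi (6 + 9 * pair p q) x w.
Proof.
  intros [Q [<- HQ]] [P [<- HP]]. exists (PComp P Q). split; [reflexivity|]. econstructor; eauto.
Qed.
Lemma phi_prec0 fa g x0 y : is_code g -> phi fa x0 y -> phi (7 + 9 * pair fa g) (pair x0 0) y.
Proof.
  intros [G <-] [F [<- HF]]. exists (PPrec F G). split; [reflexivity|]. constructor; auto.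
Qed.

Lemma is_code_cases c : is_code c <->
  c <= 4 \/
  (exists p q, (c = 5 + 9 * pair p q \/ c = 6 + 9 * pair p q \/ c = 7 + 9 * pair p q) /\
     is_code p /\ is_code q) \/
  (exists f, c = 8 + 9 * f /\ is_code f).
Proof.
  split.
  - intros [P <-]. destruct P; simpl; try (left; lia); right.
    + left. exists (encode P1), (encode P2). split; [now left|split; eexists; eauto].
    + left. exists (encode P1), (encode P2). split; [now right; left|split; eexists; eauto].
    + left. exists (encode P1), (encode P2). split; [now right; right|split; eexists; eauto].
    + right. exists (encode P). split; [reflexivity|eexists; eauto].
  - intros [H|[(p & q & H & (P & <-) & (Q & <-))|(f & -> & F & <-)]].
    + destruct c as [|[|[|[|[|]]]]]; try lia.
      * exists PZero; auto. * exists PSucc; auto. * exists PProj1; auto.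
      * exists PProj2; auto. * exists POracle; auto.
    + destruct H as [ -> | [ -> | -> ] ].
      * exists (PPair P Q); auto. * exists (PComp P Q); auto. * exists (PPrec P Q); auto.
    + exists (PMu F); auto.
Qed.

Lemma is_code_binary r p q :
  5 <= r <= 7 -> is_code (r + 9 * pair p q) -> is_code p /\ is_code q.
Proof.
  intros Hr [P HP]. destruct P; simpl in HP; try lia;
  (assert (E: pair (encode P1) (encode P2) = pair p q) by lia;
   apply pair_inj in E; destruct E as [<- <-]; split; eexists; eauto).
Qed.
Lemma is_code_mu f : is_code (8 + 9 * f) -> is_code f.
Proof.
  intros [P HP]. destruct P; simpl in HP; try lia. exists P. lia.
Qed.

Lemma phi_precS fa g x0 n z y : phi (7 + 9 * pair fa g) (pair x0 n) z ->
  phi g (pair x0 (pair n z)) y -> phi (7 + 9 * pair fa g) (pair x0 (S n)) y.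
Proof.
  intros [P [HP H1]] [G [<- HG]]. destruct P; simpl in HP; try lia.
  assert (E: pair (encode P1) (encode P2) = pair fa (encode G)) by lia.
  apply pair_inj in E. destruct E as [E1 E2]. apply encode_inj in E2. subst.
  exists (PPrec P1 G). split; [reflexivity|]. econstructor; eauto.
Qed.

Lemma phi_mu f x n : phi f (pair x n) 0 ->
  (forall m, m < n -> exists k, k <> 0 /\ phi f (pair x m) k) -> phi (8 + 9 * f) x n.
Proof.
  intros [F [<- HF]] H. exists (PMu F). split; [reflexivity|]. constructor; auto.
  intros m Hm. destruct (H m Hm) as [k [Hk [F' [HF' Hk']]]]. apply encode_inj in HF'. subst.
  eauto.
Qed.

(** * Soundness of the machine *)

(* [kret K v r]: continuing [K] with the value [v] yields the final result [r], as far as the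
   program semantics is concerned. *)
Inductive kret : nat -> nat -> nat -> Prop :=
| kr_nil v : kret 0 v v
| kr_p1 b x K u r :
    (is_code b -> exists v, phi b x v /\ kret K (pair u v) r) -> kret (kcons (fr_pair1 b x) K) u r
| kr_p2 u K v r : kret K (pair u v) r -> kret (kcons (fr_pair2 u) K) v r
| kr_comp a K v r :
    (is_code a -> exists w, phi a v w /\ kret K w r) -> kret (kcons (fr_comp a) K) v r
| kr_prec fa g x0 i n K v r :
    (phi (7 + 9 * pair fa g) (pair x0 i) v ->
       exists y, phi (7 + 9 * pair fa g) (pair x0 n) y /\ kret K y r) ->
    kret (kcons (fr_prec fa g x0 i n) K) v r
| kr_mu f x m K v r :
    ((forall m', m' < m -> exists k, k <> 0 /\ phi f (pair x m') k) -> phi f (pair x m) v ->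
       exists y, phi (8 + 9 * f) x y /\ kret K y r) ->
    kret (kcons (fr_mu f x m) K) v r.

Ltac pair_inj_all := repeat match goal with
  | H : S _ = S _ |- _ => injection H as H
  | H : pair _ _ = pair _ _ |- _ => apply pair_inj in H; destruct H
  end; subst; try discriminate.

Ltac kret_inv H := inversion H; subst;
  unfold kcons, fr_pair1, fr_pair2, fr_comp, fr_prec, fr_mu in *;
  try discriminate; pair_inj_all; auto.

Lemma kret_nil_inv v r : kret 0 v r -> v = r.
Proof. intro H. kret_inv H. Qed.
Lemma kret_p1_inv b x K u r : kret (kcons (fr_pair1 b x) K) u r ->
  is_code b -> exists v, phi b x v /\ kret K (pair u v) r.
Proof. intro H. kret_inv H. Qed.
Lemma kret_p2_inv u K v r : kret (kcons (fr_pair2 u) K) v r -> kret K (pair u v) r.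
Proof. intro H. kret_inv H. Qed.
Lemma kret_comp_inv a K v r : kret (kcons (fr_comp a) K) v r ->
  is_code a -> exists w, phi a v w /\ kret K w r.
Proof. intro H. kret_inv H. Qed.
Lemma kret_prec_inv fa g x0 i n K v r : kret (kcons (fr_prec fa g x0 i n) K) v r ->
  phi (7 + 9 * pair fa g) (pair x0 i) v ->
  exists y, phi (7 + 9 * pair fa g) (pair x0 n) y /\ kret K y r.
Proof. intro H. kret_inv H. Qed.
Lemma kret_mu_inv f x m K v r : kret (kcons (fr_mu f x m) K) v r ->
  (forall m', m' < m -> exists k, k <> 0 /\ phi f (pair x m') k) -> phi f (pair x m) v ->
  exists y, phi (8 + 9 * f) x y /\ kret K y r.
Proof. intro H. kret_inv H. Qed.

Definition state_sem (s r : nat) : Prop :=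
  let m := fst (unpair s) in let K := snd (unpair s) in
  let t := fst (unpair m) in let pay := snd (unpair m) in
  if t =? 0 then
    (is_code (fst (unpair pay)) ->
       exists y, phi (fst (unpair pay)) (snd (unpair pay)) y /\ kret K y r)
  else kret K pay r.

Lemma state_sem_eval c x K r :
  state_sem (st_eval c x K) r <-> (is_code c -> exists y, phi c x y /\ kret K y r).
Proof. unfold state_sem, st_eval. simpl_pair. rewrite Nat.eqb_refl. tauto. Qed.
Lemma state_sem_ret v K r : state_sem (st_ret v K) r <-> kret K v r.
Proof. unfold state_sem, st_ret. simpl_pair. change (1 =? 0) with false. tauto. Qed.
Lemma state_sem_tag t v K r : t <> 0 -> (state_sem (pair (pair t v) K) r <-> kret K v r).
Proof. intro H. unfold state_sem. simpl_pair. destruct (Nat.eqb_spec t 0); [lia|tauto]. Qed.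

Lemma kret_prec_step fa g x0 i n v K r :
  state_sem (step (st_ret v (kcons (fr_prec fa g x0 i n) K))) r ->
  kret (kcons (fr_prec fa g x0 i n) K) v r.
Proof.
  intro H. destruct (Nat.eq_dec i n) as [->|Hin].
  - rewrite step_ret_prec_done, state_sem_ret in H. constructor. intro. exists v. auto.
  - rewrite (step_ret_prec fa g x0 i n v K Hin), state_sem_eval in H. constructor. intro Hp.
    assert (Hg : is_code g) by (apply (is_code_binary 7 fa g); [lia|]; eapply phi_is_code; eauto).
    destruct (H Hg) as [z [H1 H2]]. eapply kret_prec_inv; eauto. eapply phi_precS; eauto.
Qed.

Lemma kret_mu_step f x m v K r :
  state_sem (step (st_ret v (kcons (fr_mu f x m) K))) r -> kret (kcons (fr_mu f x m) K) v r.
Proof.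
  intro H. destruct (Nat.eq_dec v 0) as [->|Hv].
  - rewrite step_ret_mu_found, state_sem_ret in H. constructor. intros H1 H2. exists m.
    split; auto. apply phi_mu; auto.
  - rewrite (step_ret_mu_next f x m v K Hv), state_sem_eval in H. constructor. intros H1 H2.
    destruct H as [v' [H3 H4]]. { eapply phi_is_code; eauto. }
    eapply kret_mu_inv; eauto. intros m' Hm'.
    assert (m' < m \/ m' = m) as [|] by lia; auto. subst. exists v. auto.
Qed.

Lemma state_sem_ret_step v K r : state_sem (step (st_ret v K)) r -> kret K v r.
Proof.
  intro H. destruct K as [|w].
  { rewrite step_halted, state_sem_ret in H. exact H. }
  destruct (pair_surj w) as [fr [K' ->]]. destruct (pair_surj fr) as [ft [d ->]].
  change (S (pair (pair ft d) K')) with (kcons (pair ft d) K') in *.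
  destruct ft as [|[|[|[|[|ft]]]]].
  - destruct (pair_surj d) as [b [x ->]]. change (pair 0 (pair b x)) with (fr_pair1 b x) in *.
    rewrite step_ret_pair1, state_sem_eval in H. constructor. intro Hb.
    destruct (H Hb) as [w [H1 H2]]. exists w. split; auto. apply kret_p2_inv; auto.
  - change (pair 1 d) with (fr_pair2 d) in *. rewrite step_ret_pair2, state_sem_ret in H.
    constructor; auto.
  - change (pair 2 d) with (fr_comp d) in *. rewrite step_ret_comp, state_sem_eval in H.
    constructor; auto.
  - destruct (pair_surj d) as [fa [d1 ->]]. destruct (pair_surj d1) as [g [d2 ->]].
    destruct (pair_surj d2) as [x0 [d3 ->]]. destruct (pair_surj d3) as [i [n ->]].
    apply kret_prec_step. exact H.
  - destruct (pair_surj d) as [f [d1 ->]]. destruct (pair_surj d1) as [x [m ->]].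
    apply kret_mu_step. exact H.
  - rewrite step_ret_invalid, state_sem_ret in H by lia. exact H.
Qed.

Lemma state_sem_eval_step c x K r :
  state_sem (step (st_eval c x K)) r -> state_sem (st_eval c x K) r.
Proof.
  intro H. rewrite state_sem_eval. intro Hc.
  destruct (le_lt_dec c 4) as [Hc4|Hc4].
  - destruct c as [|[|[|[|[|c]]]]]; try lia.
    + rewrite step_eval_zero, state_sem_ret in H. eauto using phi_zero.
    + rewrite step_eval_succ, state_sem_ret in H. eauto using phi_succ.
    + rewrite step_eval_proj1, state_sem_ret in H. eauto using phi_proj1.
    + rewrite step_eval_proj2, state_sem_ret in H. eauto using phi_proj2.
    + rewrite step_eval_oracle, state_sem_ret in H. eauto using phi_oracle.
  - assert (Hc9 : c = c mod 9 + 9 * (c / 9)) by (pose proof (Nat.div_mod c 9); lia).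
    assert (Hr : c mod 9 < 9) by (apply Nat.mod_upper_bound; lia).
    destruct (lt_dec (c mod 9) 5) as [Hs|Hs].
    { rewrite step_eval_invalid in H by lia. rewrite state_sem_eval in H. auto. }
    destruct (pair_surj (c / 9)) as [p [q Hpq]].
    assert (c mod 9 = 5 \/ c mod 9 = 6 \/ c mod 9 = 7 \/ c mod 9 = 8) as [E|[E|[E|E]]] by lia;
      rewrite E in Hc9; clear Hs Hr E.
    + rewrite Hpq in Hc9. subst c. destruct (is_code_binary 5 p q) as [Hp Hq]; [lia|exact Hc|].
      rewrite step_eval_pair, state_sem_eval in H. destruct (H Hp) as [u [H1 H2]].
      destruct (kret_p1_inv _ _ _ _ _ H2 Hq) as [v [H3 H4]]. eauto using phi_pair.
    + rewrite Hpq in Hc9. subst c. destruct (is_code_binary 6 p q) as [Hp Hq]; [lia|exact Hc|].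
      rewrite step_eval_comp, state_sem_eval in H. destruct (H Hq) as [u [H1 H2]].
      destruct (kret_comp_inv _ _ _ _ H2 Hp) as [w [H3 H4]]. eauto using phi_comp.
    + rewrite Hpq in Hc9. subst c. destruct (is_code_binary 7 p q) as [Hp Hq]; [lia|exact Hc|].
      rewrite step_eval_prec, state_sem_eval in H. destruct (H Hp) as [y0 [H1 H2]].
      destruct (kret_prec_inv _ _ _ _ _ _ _ _ H2) as [y [H3 H4]].
      { apply phi_prec0; auto. }
      rewrite pair_unpair in H3. eauto.
    + remember (c / 9) as f. rewrite Hc9 in Hc, H |- *.
      assert (Hf : is_code f) by (apply is_code_mu; exact Hc).
      rewrite step_eval_mu, state_sem_eval in H. destruct (H Hf) as [v [H1 H2]].
      eapply kret_mu_inv; eauto. intros; lia.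
Qed.

Lemma state_sem_step s r : state_sem (step s) r -> state_sem s r.
Proof.
  destruct (pair_surj s) as [m [K ->]]. destruct (pair_surj m) as [t [pay ->]].
  destruct (Nat.eq_dec t 0) as [->|Ht].
  - destruct (pair_surj pay) as [c [x ->]]. apply state_sem_eval_step.
  - rewrite step_ret_tag, state_sem_tag by auto. apply state_sem_ret_step.
Qed.

Lemma state_sem_run n s y : run n s = st_ret y 0 -> state_sem s y.
Proof.
  revert s; induction n; intros s H; simpl in H.
  - subst. apply state_sem_ret. constructor.
  - apply state_sem_step. auto.
Qed.

Lemma run_sound c x y n : is_code c -> run n (st_eval c x 0) = st_ret y 0 -> phi c x y.
Proof.
  intros Hc H. apply state_sem_run in H. rewrite state_sem_eval in H.
  destruct (H Hc) as [y' [H1 H2]]. apply kret_nil_inv in H2. subst. auto.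
Qed.

(** * Completeness of the machine *)

(* [evalR_ind] gives no induction hypothesis under the quantified premise of [ev_mu]. *)
Lemma evalR_strong_ind (o : nat -> bool) (P : prog -> nat -> nat -> Prop)
  (Hz : forall x, P PZero x 0) (Hs : forall x, P PSucc x (S x))
  (H1 : forall x y, P PProj1 (pair x y) x) (H2 : forall x y, P PProj2 (pair x y) y)
  (Ho : forall x, P POracle x (if o x then 1 else 0))
  (Hp : forall f g x u v, evalR o f x u -> P f x u -> evalR o g x v -> P g x v ->
     P (PPair f g) x (pair u v))
  (Hc : forall f g x u v, evalR o g x u -> P g x u -> evalR o f u v -> P f u v ->
     P (PComp f g) x v)
  (H0 : forall f g x y, evalR o f x y -> P f x y -> P (PPrec f g) (pair x 0) y)
  (HS : forall f g x n z y, evalR o (PPrec f g) (pair x n) z -> P (PPrec f g) (pair x n) z ->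
     evalR o g (pair x (pair n z)) y -> P g (pair x (pair n z)) y ->
     P (PPrec f g) (pair x (S n)) y)
  (Hm : forall f x n, evalR o f (pair x n) 0 -> P f (pair x n) 0 ->
     (forall m, m < n -> exists k, k <> 0 /\ evalR o f (pair x m) k /\ P f (pair x m) k) ->
     P (PMu f) x n) :
  forall p x y, evalR o p x y -> P p x y.
Proof.
  fix IH 4. intros p x y H. destruct H.
  - apply Hz. - apply Hs. - apply H1. - apply H2. - apply Ho.
  - apply Hp; auto.
  - eapply Hc; eauto.
  - apply H0; auto.
  - eapply HS; eauto.
  - apply Hm; auto. intros m Hm'. destruct (H3 m Hm') as [k [Hk Hev]].
    exists k. split; [exact Hk|]. split; [exact Hev|]. apply IH. exact Hev.
Qed.

Definition reach s t := exists n, run n s = t.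
Lemma reach_refl s : reach s s.
Proof. exists 0; reflexivity. Qed.
Lemma reach_trans s t u : reach s t -> reach t u -> reach s u.
Proof. intros [n H] [m H']. exists (n + m). rewrite run_add, H; auto. Qed.
Lemma reach_step s t u : step s = t -> reach t u -> reach s u.
Proof. intros H [m H']. exists (S m). simpl. rewrite H; auto. Qed.

Lemma reach_mu_prefix cf x n K :
  (forall m, m < n ->
     exists k, k <> 0 /\ forall K', reach (st_eval cf (pair x m) K') (st_ret k K')) ->
  reach (st_eval (8 + 9 * cf) x K) (st_eval cf (pair x n) (kcons (fr_mu cf x n) K)).
Proof.
  intro Hlt. induction n as [|m IH].
  - eapply reach_step; [apply step_eval_mu|apply reach_refl].
  - eapply reach_trans; [apply IH; intros; apply Hlt; lia|].
    destruct (Hlt m) as [k [Hk Hm]]; [lia|].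
    eapply reach_trans; [apply Hm|].
    eapply reach_step; [apply step_ret_mu_next; auto|apply reach_refl].
Qed.

(* The second clause is the loop invariant of primitive recursion: starting the base case with
   the recursion frame at index 0 reaches the value at index [n] with the frame at index [n]. *)
Definition run_complete_spec (p : prog) (x y : nat) : Prop :=
  (forall K, reach (st_eval (encode p) x K) (st_ret y K)) /\
  (forall f g, p = PPrec f g -> forall x0 n, x = pair x0 n -> forall K N, n <= N ->
     reach (st_eval (encode f) x0 (kcons (fr_prec (encode f) (encode g) x0 0 N) K))
           (st_ret y (kcons (fr_prec (encode f) (encode g) x0 n N) K))).

Lemma evalR_run_complete p x y : evalR (fun _ => false) p x y -> run_complete_spec p x y.
Proof.
  apply evalR_strong_ind; unfold run_complete_spec; intros;
    (split; [|intros ff gg Heq; try discriminate]).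
  - intro K. eapply reach_step; [apply step_eval_zero|apply reach_refl].
  - intro K. eapply reach_step; [apply step_eval_succ|apply reach_refl].
  - intro K. eapply reach_step; [apply step_eval_proj1|]. rewrite fst_pair. apply reach_refl.
  - intro K. eapply reach_step; [apply step_eval_proj2|]. rewrite snd_pair. apply reach_refl.
  - intro K. eapply reach_step; [apply step_eval_oracle|apply reach_refl].
  - intro K. simpl encode. eapply reach_step; [apply step_eval_pair|].
    eapply reach_trans; [apply H0|]. eapply reach_step; [apply step_ret_pair1|].
    eapply reach_trans; [apply H2|]. eapply reach_step; [apply step_ret_pair2|apply reach_refl].
  - intro K. simpl encode. eapply reach_step; [apply step_eval_comp|].
    eapply reach_trans; [apply H0|]. eapply reach_step; [apply step_ret_comp|]. apply H2.
  - intro K. simpl encode. eapply reach_step; [apply step_eval_prec|]. rewrite fst_pair, snd_pair.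
    eapply reach_trans; [apply (proj1 H0)|].
    eapply reach_step; [apply step_ret_prec_done|apply reach_refl].
  - injection Heq as -> ->. intros x1 n1 Hx K N HN. apply pair_inj in Hx. destruct Hx as [<- <-].
    apply (proj1 H0).
  - destruct H0 as [_ H0]. intro K. simpl encode. eapply reach_step; [apply step_eval_prec|].
    rewrite fst_pair, snd_pair.
    eapply reach_trans; [apply (H0 f g eq_refl _ _ eq_refl K (S n)); lia|].
    eapply reach_step; [apply step_ret_prec; lia|]. eapply reach_trans; [apply H2|].
    eapply reach_step; [apply step_ret_prec_done|apply reach_refl].
  - injection Heq as -> ->. intros x1 n1 Hx K N HN. apply pair_inj in Hx. destruct Hx as [<- <-].
    destruct H0 as [_ H0]. eapply reach_trans; [apply (H0 ff gg eq_refl _ _ eq_refl K N); lia|].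
    eapply reach_step; [apply step_ret_prec; lia|]. apply (proj1 H2).
  - intro K. simpl encode. eapply reach_trans.
    { apply (reach_mu_prefix _ _ n). intros m Hm.
      destruct (H1 m Hm) as [k [Hk [_ [Hreach _]]]]. eauto. }
    eapply reach_trans; [apply H0|].
    eapply reach_step; [apply step_ret_mu_found|apply reach_refl].
Qed.

Lemma run_complete c x y : phi c x y -> exists n, run n (st_eval c x 0) = st_ret y 0.
Proof. intros [p [<- H]]. apply evalR_run_complete in H. apply H. Qed.

Lemma phi_functional c x y1 y2 : phi c x y1 -> phi c x y2 -> y1 = y2.
Proof.
  intros H1 H2. apply run_complete in H1. apply run_complete in H2.
  destruct H1 as [n1 H1]. destruct H2 as [n2 H2].
  pose proof (run_mono n1 (n1 + n2) _ _ H1 ltac:(lia)) as E1.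
  pose proof (run_mono n2 (n1 + n2) _ _ H2 ltac:(lia)) as E2.
  rewrite E1 in E2. unfold st_ret in E2. pair_inj_all. reflexivity.
Qed.

(** * Step-counted evaluation *)

Lemma is_code_div9 i : 4 < i -> (is_code i <->
  ((i mod 9 = 5 \/ i mod 9 = 6 \/ i mod 9 = 7) /\
     is_code (fst (unpair (i / 9))) /\ is_code (snd (unpair (i / 9)))) \/
  (i mod 9 = 8 /\ is_code (i / 9))).
Proof.
  intro Hi. rewrite is_code_cases. split.
  - intros [H|[(p & q & H & Hp & Hq)|(f & H & Hf)]]; [lia| |].
    + left. destruct H as [ -> | [ -> | -> ] ].
      * destruct (divmod9 5 (pair p q)) as [H1 H2]; [lia|]. rewrite H1, H2, unpair_pair. auto.
      * destruct (divmod9 6 (pair p q)) as [H1 H2]; [lia|]. rewrite H1, H2, unpair_pair. auto.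
      * destruct (divmod9 7 (pair p q)) as [H1 H2]; [lia|]. rewrite H1, H2, unpair_pair. auto.
    + right. subst. destruct (divmod9 8 f) as [H1 H2]; [lia|]. rewrite H1, H2. auto.
  - assert (Hc9 : i = i mod 9 + 9 * (i / 9)) by (pose proof (Nat.div_mod i 9); lia).
    intros [[H [Hp Hq]]|[H Hf]]; right.
    + left. exists (fst (unpair (i / 9))), (snd (unpair (i / 9))). rewrite pair_unpair.
      split; auto. lia.
    + right. exists (i / 9). split; auto. lia.
Qed.

(* [code_bit i mask] decides [is_code i] from the answers [mask] for the codes below [i]; this
   suffices since the subcodes of a code are smaller than it. *)
Definition code_bit (i mask : nat) : nat :=
  if i <=? 4 then 1 else
  let r := i mod 9 in let k := i / 9 in
  if (r =? 5) || (r =? 6) || (r =? 7) then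
    (if bit mask (fst (unpair k)) + bit mask (snd (unpair k)) =? 2 then 1 else 0)
  else if r =? 8 then bit mask k else 0.

Lemma code_bit_spec n mask : (forall j, j < n -> (bit mask j = 1 <-> is_code j)) ->
  (code_bit n mask = 1 <-> is_code n).
Proof.
  intro Hmask. unfold code_bit. destruct (Nat.leb_spec n 4).
  { split; auto. intros _. apply is_code_cases. auto. }
  rewrite is_code_div9 by auto.
  assert (Hk : n / 9 < n) by (apply Nat.div_lt; lia).
  set (k := n / 9) in *.
  pose proof (pair_unpair k). pose proof (pair_ge (fst (unpair k)) (snd (unpair k))).
  destruct (Nat.eqb_spec (n mod 9) 5); [|destruct (Nat.eqb_spec (n mod 9) 6);
    [|destruct (Nat.eqb_spec (n mod 9) 7)]]; cbn [orb].
  1-3: rewrite <- (Hmask (fst (unpair k))), <- (Hmask (snd (unpair k))) by lia;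
    pose proof (bit_le1 mask (fst (unpair k))); pose proof (bit_le1 mask (snd (unpair k)));
    destruct (Nat.eqb_spec (bit mask (fst (unpair k)) + bit mask (snd (unpair k))) 2);
    split; intros Hb; try lia; try (left; repeat split; lia);
    destruct Hb as [[? [? ?]]|[? ?]]; lia.
  destruct (Nat.eqb_spec (n mod 9) 8).
  - rewrite <- (Hmask k) by lia. split; [intro; right; auto|intros [[? ?]|[? ?]]; auto; lia].
  - split; [lia|]. intros [[? ?]|[? ?]]; lia.
Qed.

Definition ECodeBit : fexp :=
  let I := EFst in let M := ESnd in
  let R := ESnd @ EDivMod 9 @ I in let Kk := EFst @ EDivMod 9 @ I in
  let BOTH :=
    EIfEq (EAdd (EBit @ EPair M (EFst @ Kk)) (EBit @ EPair M (ESnd @ Kk))) (EConst 2)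
      (EConst 1) (EConst 0) in
  EIfLe I (EConst 4) (EConst 1)
   (EIfEq R (EConst 5) BOTH (EIfEq R (EConst 6) BOTH (EIfEq R (EConst 7) BOTH
     (EIfEq R (EConst 8) (EBit @ EPair M Kk) (EConst 0))))).

Lemma den_CodeBit o i mask : den o ECodeBit (pair i mask) = code_bit i mask.
Proof.
  unfold ECodeBit, code_bit. rewrite den_IfLe. cbn [den]. rewrite !den_Const. simpl_pair.
  destruct (i <=? 4); [reflexivity|].
  rewrite !den_IfEq. cbn [den]. rewrite ?den_IfEq, !den_Const, !den_Add. cbn [den].
  rewrite den_DivMod by lia. simpl_pair. rewrite !den_Bit, ?den_Const.
  destruct (i mod 9 =? 5); [reflexivity|]. destruct (i mod 9 =? 6); [reflexivity|].
  destruct (i mod 9 =? 7); [reflexivity|]. simpl. reflexivity.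
Qed.

Definition code_table (n : nat) : nat * nat :=
  nat_rect (fun _ => (nat * nat)%type) (0, 1)
    (fun i z => ((if code_bit i (fst z) =? 1 then fst z + snd z else fst z), 2 * snd z)) n.

Lemma code_table_spec n : snd (code_table n) = 2 ^ n /\ fst (code_table n) < 2 ^ n /\
  forall j, j < n -> (bit (fst (code_table n)) j = 1 <-> is_code j).
Proof.
  induction n as [|n [H1 [H2 H3]]].
  { simpl. split; [reflexivity|split; [lia|intros; lia]]. }
  simpl code_table. cbn [fst snd]. rewrite H1.
  pose proof (code_bit_spec n _ H3) as Hn.
  set (m := fst (code_table n)) in *.
  set (b := if code_bit n m =? 1 then 1 else 0).
  assert (Hm : (if code_bit n m =? 1 then m + 2 ^ n else m) = m + b * 2 ^ n)
    by (unfold b; destruct (code_bit n m =? 1); lia).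
  assert (Hb : b <= 1) by (unfold b; destruct (_ =? _); lia).
  rewrite Hm. split; [simpl; lia|]. split; [simpl; nia|].
  intros j Hj. assert (j < n \/ j = n) as [Hj' | ->] by lia.
  - rewrite bit_add_high_low by auto. auto.
  - rewrite bit_add_high_top by auto. rewrite <- Hn. unfold b.
    destruct (Nat.eqb_spec (code_bit n m) 1); split; intro; lia.
Qed.

Definition ECodeTable : fexp :=
  EPrec (EPair EZero (EConst 1))
    (EPair (EIfEq (ECodeBit @ EPair ERecIdx (EFst @ ERecVal)) (EConst 1)
              (EAdd (EFst @ ERecVal) (ESnd @ ERecVal)) (EFst @ ERecVal))
           (EScale 2 (ESnd @ ERecVal))).

Lemma den_CodeTable o c n :
  den o ECodeTable (pair c n) = pair (fst (code_table n)) (snd (code_table n)).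
Proof.
  unfold ECodeTable. cbn [den]. simpl_pair. unfold prec_iter. induction n; cbn [nat_rect].
  - cbn [den]. rewrite den_Const. reflexivity.
  - cbn [den]. rewrite den_IfEq, den_Scale, den_Add. cbn [den].
    rewrite !den_ERecVal, den_ERecIdx, IHn, den_Const. simpl_pair. rewrite den_CodeBit.
    simpl code_table. cbn [fst snd].
    destruct (code_bit n (fst (code_table n)) =? 1); reflexivity.
Qed.

Definition EIsCode : fexp := EBit @ EPair (EFst @ ECodeTable @ EPair EId ESucc) EId.

Lemma den_IsCode o c : den o EIsCode c = 1 <-> is_code c.
Proof.
  unfold EIsCode. cbn [den]. rewrite den_Id, den_CodeTable. simpl_pair. rewrite den_Bit.
  destruct (code_table_spec (S c)) as [_ [_ H]]. apply H. lia.
Qed.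

Lemma den_IsCode_le1 o c : den o EIsCode c <= 1.
Proof.
  unfold EIsCode. cbn [den]. rewrite den_Id, den_CodeTable. simpl_pair. rewrite den_Bit.
  apply bit_le1.
Qed.

(* Keeps conversion from unfolding the Cantor pairing. *)
Strategy opaque [pair unpair].

Lemma oracle_free_EStep : oracle_free EStep = true.
Proof. vm_compute. reflexivity. Qed.

Lemma den_Step o s : den o EStep s = step s.
Proof. unfold step. apply den_oracle_free. apply oracle_free_EStep. Qed.

Definition ERun : fexp := EPrec (EPair (EPair (EConst 0) EId) EZero) (EStep @ ERecVal).

Lemma den_Run o c x n : den o ERun (pair (pair c x) n) = run n (st_eval c x 0).
Proof.
  unfold ERun. cbn [den]. simpl_pair. unfold prec_iter. induction n; cbn [nat_rect].
  - cbn [den]. rewrite den_Const, den_Id. reflexivity.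
  - cbn [den]. rewrite den_ERecVal, den_Step, IHn, run_S. reflexivity.
Qed.

Definition EHalted : fexp :=
  EIfEq (EFst @ EFst) (EConst 1) (EIfEq ESnd (EConst 0) EZero (EConst 1)) (EConst 1).

Lemma den_Halted o s : den o EHalted s = 0 <-> exists v, s = st_ret v 0.
Proof.
  unfold EHalted. rewrite !den_IfEq. cbn [den]. rewrite !den_Const.
  destruct (pair_surj s) as [m [K ->]]. destruct (pair_surj m) as [t [v ->]]. simpl_pair.
  unfold st_ret. split.
  - destruct (Nat.eqb_spec t 1); [|discriminate]. destruct (Nat.eqb_spec K 0); [|discriminate].
    subst. eauto.
  - intros [v' H]. pair_inj_all. reflexivity.
Qed.

Lemma den_Halted_le1 o s : den o EHalted s <= 1.
Proof.
  unfold EHalted. rewrite !den_IfEq. cbn [den]. rewrite !den_Const.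
  destruct (_ =? _); [destruct (_ =? _)|]; cbn [den]; lia.
Qed.

Definition EOutput : fexp := ESnd @ EFst.
Lemma den_Output o v K : den o EOutput (st_ret v K) = v.
Proof. unfold EOutput, st_ret. cbn [den]. simpl_pair. reflexivity. Qed.

(* Tests return [0] for true, so that conjunctions of tests become sums. *)
Definition EHaltTest : fexp :=
  EIfEq (EIsCode @ EFst @ EFst) (EConst 1) (EHalted @ ERun) (EConst 1).
Definition EOutTest : fexp := EOutput @ ERun.

Definition halt_flag (c x n : nat) : nat := den (fun _ => false) EHaltTest (pair (pair c x) n).
Definition run_out (c x n : nat) : nat := den (fun _ => false) EOutTest (pair (pair c x) n).

Lemma oracle_free_EHaltTest : oracle_free EHaltTest = true.
Proof. vm_compute. reflexivity. Qed.
Lemma oracle_free_EOutTest : oracle_free EOutTest = true.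
Proof. vm_compute. reflexivity. Qed.

Definition EHaltFlag (cf xf nf : fexp) : fexp := EHaltTest @ EPair (EPair cf xf) nf.
Definition ERunOut (cf xf nf : fexp) : fexp := EOutTest @ EPair (EPair cf xf) nf.

Lemma den_HaltFlag o cf xf nf w :
  den o (EHaltFlag cf xf nf) w = halt_flag (den o cf w) (den o xf w) (den o nf w).
Proof. unfold EHaltFlag, halt_flag. cbn [den]. apply den_oracle_free, oracle_free_EHaltTest. Qed.

Lemma den_RunOut o cf xf nf w :
  den o (ERunOut cf xf nf) w = run_out (den o cf w) (den o xf w) (den o nf w).
Proof. unfold ERunOut, run_out. cbn [den]. apply den_oracle_free, oracle_free_EOutTest. Qed.

Lemma halt_flag_iff c x n :
  halt_flag c x n = 0 <-> is_code c /\ exists v, run n (st_eval c x 0) = st_ret v 0.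
Proof.
  unfold halt_flag, EHaltTest. rewrite den_IfEq. cbn [den]. simpl_pair. rewrite den_Const.
  pose proof (den_IsCode_le1 (fun _ => false) c). pose proof (den_IsCode (fun _ => false) c).
  destruct (Nat.eqb_spec (den (fun _ : nat => false) EIsCode c) 1).
  - rewrite den_Run, den_Halted. tauto.
  - split; [discriminate|]. intros [Hc _]. apply H0 in Hc. lia.
Qed.

Lemma halt_flag_le1 c x n : halt_flag c x n <= 1.
Proof.
  unfold halt_flag, EHaltTest. rewrite den_IfEq. cbn [den]. simpl_pair. rewrite den_Const.
  destruct (_ =? _); [apply den_Halted_le1|]. cbn [den]. lia.
Qed.

Lemma run_out_run c x n v : run n (st_eval c x 0) = st_ret v 0 -> run_out c x n = v.
Proof. intro H. unfold run_out, EOutTest. cbn [den]. rewrite den_Run, H. apply den_Output. Qed.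

Lemma halt_flag_sound c x n : halt_flag c x n = 0 -> phi c x (run_out c x n).
Proof.
  intro H. apply halt_flag_iff in H. destruct H as [Hc [v Hv]].
  rewrite (run_out_run _ _ _ _ Hv). eapply run_sound; eauto.
Qed.

Lemma halt_flag_complete c x y : phi c x y ->
  exists n, forall m, n <= m -> halt_flag c x m = 0 /\ run_out c x m = y.
Proof.
  intro H. pose proof (phi_is_code _ _ _ H) as Hc. apply run_complete in H. destruct H as [n Hn].
  exists n. intros m Hm. pose proof (run_mono _ _ _ _ Hn Hm) as H'.
  split; [apply halt_flag_iff; eauto|]. apply run_out_run; auto.
Qed.

Lemma halt_flag_mono c x n m : halt_flag c x n = 0 -> n <= m ->
  halt_flag c x m = 0 /\ run_out c x m = run_out c x n.
Proof.
  intros H Hm. apply halt_flag_iff in H. destruct H as [Hc [v Hv]].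
  pose proof (run_mono _ _ _ _ Hv Hm).
  split; [apply halt_flag_iff; eauto|]. rewrite (run_out_run _ _ _ _ Hv). apply run_out_run; auto.
Qed.

Lemma halt_flag_output c x n y : phi c x y -> halt_flag c x n = 0 -> run_out c x n = y.
Proof. intros Hy Hn. eapply phi_functional; [apply halt_flag_sound, Hn|exact Hy]. Qed.

Lemma halt_flag_uniform (P : nat -> Prop) c n :
  (forall z, z < n -> P z -> exists y, phi c z y) ->
  exists t, forall z, z < n -> P z -> halt_flag c z t = 0.
Proof.
  intro H. induction n.
  - exists 0. intros; lia.
  - destruct IHn as [t1 Ht1]; [intros; apply H; auto; lia|].
    destruct (classic (P n)) as [Pn|Pn].
    + destruct (H n (Nat.lt_succ_diag_r n) Pn) as [y Hy].
      destruct (halt_flag_complete _ _ _ Hy) as [t2 Ht2].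
      exists (t1 + t2). intros z Hz Pz. assert (z < n \/ z = n) as [|] by lia.
      * apply (halt_flag_mono c z t1); [apply Ht1; auto|lia].
      * subst. apply Ht2. lia.
    + exists t1. intros z Hz Pz. assert (z < n \/ z = n) as [|] by lia;
        [apply Ht1; auto|subst; contradiction].
Qed.

(** * Unbounded search and parametrization *)

Lemma evalR_compile_den o e x y : evalR o (compile e) x y -> y = den o e x.
Proof.
  revert e x y.
  enough (G : forall p x y, evalR o p x y -> forall e, p = compile e -> y = den o e x)
    by (intros e x y H; eapply G; eauto).
  apply (evalR_strong_ind o (fun p x y => forall e, p = compile e -> y = den o e x));
    intros until e; intro Heq; destruct e; cbn [compile] in Heq; try discriminate;
    cbn [den]; simpl_pair; auto.
  - injection Heq as Ha Hb. erewrite (H0 e1), (H2 e2); auto.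
  - injection Heq as Ha Hb. erewrite (H0 e2) in H1 by auto. erewrite (H2 e1); auto.
  - injection Heq as Ha Hb. unfold prec_iter. cbn [nat_rect]. apply H0; auto.
  - injection Heq as Ha Hb. subst. specialize (H0 (EPrec e1 e2) eq_refl).
    cbn [den] in H0. rewrite unpair_pair in H0. rewrite (H2 e2 eq_refl), H0. reflexivity.
Qed.

Lemma mu_sound o Q x n : evalR o (PMu (compile Q)) x n ->
  den o Q (pair x n) = 0 /\ forall m, m < n -> den o Q (pair x m) <> 0.
Proof.
  intro H. inversion H as [| | | | | | | | |f x' n' H0 Hlt]; subst. split.
  - symmetry. apply evalR_compile_den. assumption.
  - intros m Hm. destruct (Hlt m Hm) as [k [Hk Hk']].
    apply evalR_compile_den in Hk'. congruence.
Qed.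

Lemma mu_complete o Q x : (exists n, den o Q (pair x n) = 0) ->
  exists n, evalR o (PMu (compile Q)) x n /\ den o Q (pair x n) = 0.
Proof.
  intro Hex.
  destruct (dec_inh_nat_subset_has_unique_least_element (fun n => den o Q (pair x n) = 0))
    as [m [[Hm Hleast] _]]; [intro; lia|exact Hex|].
  exists m. split; auto. constructor.
  - rewrite <- Hm. apply compile_correct.
  - intros k Hk. exists (den o Q (pair x k)).
    split; [intro E; specialize (Hleast k E); lia|apply compile_correct].
Qed.

Definition PSearch (T : fexp) : prog := PPair (compile EId) (PMu (compile T)).

Lemma PSearch_sound o T w v : evalR o (PSearch T) w v -> exists m, v = pair w m /\
  den o T (pair w m) = 0 /\ forall k, k < m -> den o T (pair w k) <> 0.
Proof.
  intro H. inversion H as [| | | | |f g w' u m Hid Hmu| | | |]; subst.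
  change (PPair PProj1 PProj2) with (compile EId) in Hid.
  apply evalR_compile_den in Hid. rewrite den_Id in Hid. subst.
  apply mu_sound in Hmu. eauto.
Qed.

Lemma PSearch_complete o T w : (exists m, den o T (pair w m) = 0) ->
  exists m, evalR o (PSearch T) w (pair w m) /\ den o T (pair w m) = 0.
Proof.
  intro H. destruct (mu_complete o T w H) as [m [H1 H2]]. exists m. split; auto.
  unfold PSearch. pose proof (compile_correct o EId w) as h. rewrite den_Id in h. constructor; auto.
Qed.

Lemma evalR_comp_inv o f g x y :
  evalR o (PComp f g) x y -> exists u, evalR o g x u /\ evalR o f u y.
Proof. intro H. inversion H; subst. eauto. Qed.

Lemma defined_encode P x : defined (encode P) x <-> exists y, evalR (fun _ => false) P x y.
Proof. unfold defined, phi. split; intros [y Hy]; exists y; apply phiO_enc; auto. Qed.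

Lemma computable_prog (f : nat -> nat) :
  computable f -> exists P, forall x, evalR (fun _ => false) P x (f x).
Proof.
  intros [c Hc]. destruct (Hc 0) as [P [HP _]]. exists P. intro x.
  destruct (Hc x) as [Q [HQ H]]. rewrite <- HQ in HP. apply encode_inj in HP. subst. auto.
Qed.

Lemma computable_comp_den (f : nat -> nat) (G : fexp) :
  computable f -> computable (fun x => f (den (fun _ => false) G x)).
Proof.
  intro Hf. destruct (computable_prog f Hf) as [P HP].
  exists (encode (PComp P (compile G))). intro x. unfold phi. apply phiO_enc.
  econstructor; [apply compile_correct|apply HP].
Qed.

Definition smn (cP n : nat) : nat := 6 + 9 * pair cP (encode (compile (EPair (EConst n) EId))).

Lemma phi_smn P n z y : phi (smn (encode P) n) z y <-> evalR (fun _ => false) P (pair n z) y.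
Proof.
  unfold smn. change (6 + 9 * _) with (encode (PComp P (compile (EPair (EConst n) EId)))).
  unfold phi. rewrite phiO_enc. split.
  - intros [u [Hu Hy]]%evalR_comp_inv. apply evalR_compile_den in Hu.
    cbn [den] in Hu. rewrite den_Const, den_Id in Hu. subst. exact Hy.
  - intro H. eapply ev_comp; [|exact H].
    pose proof (compile_correct (fun _ => false) (EPair (EConst n) EId) z) as Hc.
    cbn [den] in Hc. rewrite den_Const, den_Id in Hc. exact Hc.
Qed.

Definition ECodeConstStep := EAdd (EConst 6) (EScale 9 (EPair (EConst 1) ERecVal)).
Definition ECodeConst : fexp := EPrec EZero ECodeConstStep @ EPair EZero EId.

Lemma den_CodeConst o n : den o ECodeConst n = encode (compile (EConst n)).
Proof.
  unfold ECodeConst. cbn [den]. rewrite den_Id. simpl_pair. unfold prec_iter. induction n.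
  - reflexivity.
  - cbn [nat_rect]. rewrite IHn. unfold ECodeConstStep. rewrite den_Add, den_Scale, den_Const.
    cbn [den]. rewrite den_Const, den_ERecVal. reflexivity.
Qed.

Definition ESmn (cP : nat) (nf : fexp) : fexp :=
  EAdd (EConst 6) (EScale 9 (EPair (EConst cP)
    (EAdd (EConst 5) (EScale 9 (EPair (ECodeConst @ nf) (EConst (encode (compile EId)))))))).

Lemma den_Smn o cP nf w : den o (ESmn cP nf) w = smn cP (den o nf w).
Proof.
  unfold ESmn, smn. rewrite den_Add, den_Scale, den_Const. cbn [den].
  rewrite den_Const, den_Add, den_Scale, den_Const. cbn [den]. rewrite den_Const, den_CodeConst.
  reflexivity.
Qed.

Ltac den_simpl := repeat (progress (cbn [den];
  rewrite ?den_Add, ?den_IfLe, ?den_IfEq, ?den_HaltFlag, ?den_RunOut, ?den_Const, ?den_Id,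
    ?den_Sum, ?den_Bit, ?den_Smn; simpl_pair)).

(** * Effective simplicity of the deficiency set *)

Section Enumeration.

Variables (ca : nat) (a : nat -> nat).
Hypothesis Ha : forall x, phi ca x (a x).

Lemma run_out_enum x N : halt_flag ca x N = 0 -> run_out ca x N = a x.
Proof. apply halt_flag_output, Ha. Qed.

Lemma enum_halts_upto s :
  exists N, forall N', N <= N' -> forall t, t <= s -> halt_flag ca t N' = 0.
Proof.
  destruct (halt_flag_uniform (fun _ => True) ca (S s)) as [N HN].
  { intros z _ _. eexists. apply Ha. }
  exists N. intros N' HN' t Ht. apply (halt_flag_mono ca t N N'); [apply HN; auto; lia|exact HN'].
Qed.

Definition EDefWitness : fexp :=
  let s := EFst in let t := EFst @ ESnd in let N := ESnd @ ESnd in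
  EAdd (EIfLe (ESucc @ s) t EZero (EConst 1))
  (EAdd (EHaltFlag (EConst ca) s N) (EAdd (EHaltFlag (EConst ca) t N)
     (EIfLe (ESucc @ ERunOut (EConst ca) t N) (ERunOut (EConst ca) s N) EZero (EConst 1)))).

Lemma den_DefWitness o s t N : den o EDefWitness (pair s (pair t N)) = 0 <->
  s < t /\ halt_flag ca s N = 0 /\ halt_flag ca t N = 0 /\ run_out ca t N < run_out ca s N.
Proof.
  unfold EDefWitness. den_simpl.
  destruct (Nat.leb_spec (S s) t); destruct (Nat.leb_spec (S (run_out ca t N)) (run_out ca s N));
    den_simpl; pose proof (halt_flag_le1 ca s N); pose proof (halt_flag_le1 ca t N); lia.
Qed.

Lemma re_deficiency : re (deficiency a).
Proof.
  exists (encode (PMu (compile EDefWitness))). intro s. unfold W. rewrite defined_encode.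
  unfold deficiency. split.
  - intros [t [Hst Ht]]. destruct (enum_halts_upto t) as [N HN].
    destruct (mu_complete (fun _ => false) EDefWitness s) as [m [Hm _]]; [|eauto].
    exists (pair t N). apply den_DefWitness. repeat split; auto; try (apply HN; lia).
    rewrite !(run_out_enum _ N) by (apply HN; lia). auto.
  - intros [m Hm]. apply mu_sound in Hm. destruct Hm as [Hm _].
    destruct (pair_surj m) as [t [N ->]]. apply den_DefWitness in Hm.
    destruct Hm as [H1 [H2 [H3 H4]]].
    exists t. split; auto. rewrite !(run_out_enum _ N) in H4 by auto. auto.
Qed.

Definition EApproxTest : fexp :=
  let e := EFst @ EFst in let z := ESnd @ EFst in let s := EFst @ ESnd in let N := ESnd @ ESnd in
  EAdd (EHaltFlag e s N)
    (EAdd (ESum (EHaltFlag (EConst ca) ESnd EFst) @ EPair N (ESucc @ s))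
      (EIfLe (ERunOut (EConst ca) s N) z (EConst 1) EZero)).

Lemma den_ApproxTest o e z s N : den o EApproxTest (pair (pair e z) (pair s N)) = 0 <->
  halt_flag e s N = 0 /\ (forall t, t <= s -> halt_flag ca t N = 0) /\ z < run_out ca s N.
Proof.
  unfold EApproxTest. den_simpl.
  rewrite (sumto_ext _ (fun t => halt_flag ca t N)) by (intro; den_simpl; reflexivity).
  pose proof (sumto_zero (fun t => halt_flag ca t N) (S s)) as Hs.
  destruct (Nat.leb_spec (run_out ca s N) z); den_simpl.
  - split; [lia|]. intros [_ [_ H']]. lia.
  - split.
    + intro H0. split; [lia|]. split; [|lia]. intros t Ht. apply Hs; lia.
    + intros [H1 [H2 _]].
      assert (sumto (fun t => halt_flag ca t N) (S s) = 0) by (apply Hs; intros; apply H2; lia).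
      lia.
Qed.

Definition EApproxAnswer : fexp :=
  let z := ESnd @ EFst in let s := EFst @ ESnd in let N := ESnd @ ESnd in
  EIfEq (ESum (EIfEq (ERunOut (EConst ca) ESnd (EFst @ EFst)) (ESnd @ EFst) (EConst 1) EZero)
           @ EPair (EPair N z) (ESucc @ s))
    (EConst 0) EZero (EConst 1).

Lemma den_ApproxAnswer o e z s N : den o EApproxAnswer (pair (pair e z) (pair s N)) =
  if sumto (fun t => if run_out ca t N =? z then 1 else 0) (S s) =? 0 then 0 else 1.
Proof.
  unfold EApproxAnswer. den_simpl.
  rewrite (sumto_ext _ (fun t => if run_out ca t N =? z then 1 else 0))
    by (intro; den_simpl; reflexivity).
  destruct (_ =? 0); reflexivity.
Qed.

(* [approx_code e] is the index g(e) of the proof idea. *)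
Definition PApprox : prog := PComp (compile EApproxAnswer) (PSearch EApproxTest).
Definition approx_code (e : nat) : nat := smn (encode PApprox) e.

Lemma approx_code_total e s y z : phi e s y -> z < a s -> defined (approx_code e) z.
Proof.
  intros Hy Hz. destruct (halt_flag_complete _ _ _ Hy) as [N1 HN1].
  destruct (enum_halts_upto s) as [N2 HN2].
  destruct (PSearch_complete (fun _ => false) EApproxTest (pair e z)) as [m [Hm _]].
  { exists (pair s (N1 + N2)). apply den_ApproxTest. split; [apply HN1; lia|]. split.
    - intros t Ht. apply HN2; auto; lia.
    - rewrite run_out_enum by (apply HN2; lia). lia. }
  exists (den (fun _ => false) EApproxAnswer (pair (pair e z) m)).
  unfold approx_code. apply phi_smn. unfold PApprox.
  econstructor; [exact Hm|apply compile_correct].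
Qed.

Variable A : nat -> Prop.
Hypothesis HA : forall x, A x <-> exists t, a t = x.

Lemma approx_code_correct e z y : (forall x, W e x -> ~ deficiency a x) ->
  phi (approx_code e) z y -> chi A z y.
Proof.
  intros He Hy. apply phi_smn in Hy. apply evalR_comp_inv in Hy. destruct Hy as [u [Hu Hy]].
  apply PSearch_sound in Hu. destruct Hu as [m [-> [Hm _]]]. apply evalR_compile_den in Hy.
  destruct (pair_surj m) as [s [N ->]]. apply den_ApproxTest in Hm. destruct Hm as [H1 [H2 H3]].
  rewrite den_ApproxAnswer in Hy. subst y.
  assert (HsD : ~ deficiency a s) by (apply He; eexists; apply halt_flag_sound, H1).
  assert (Hout : forall t, t <= s -> run_out ca t N = a t)
    by (intros t Ht; apply run_out_enum, H2, Ht).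
  unfold chi.
  destruct (Nat.eqb_spec (sumto (fun t => if run_out ca t N =? z then 1 else 0) (S s)) 0)
    as [E|E].
  - right. split; auto. intros [t Ht]%HA.
    rewrite sumto_indicator_zero in E. destruct (le_lt_dec t s) as [Hts|Hts].
    + apply (E t); [lia|]. rewrite Hout; auto.
    + apply HsD. exists t. split; auto. rewrite Hout in H3 by lia. lia.
  - left. split; auto. apply HA. apply NNPP. intro Hn. apply E. apply sumto_indicator_zero.
    intros t Ht Heq. apply Hn. exists t. rewrite <- Hout by lia. auto.
Qed.

End Enumeration.

Lemma injective_large_value (f : nat -> nat) l F : (forall x y, f x = f y -> x = y) ->
  NoDup l -> F < length l -> exists s, In s l /\ F <= f s.
Proof.
  intros Hinj Hl HF. apply NNPP. intro Hn.
  assert (Hincl : incl (map f l) (seq 0 F)).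
  { intros v Hv. apply in_map_iff in Hv. destruct Hv as [s [<- Hs]]. apply in_seq.
    assert (~ F <= f s) by (intro; apply Hn; eauto). lia. }
  pose proof (NoDup_incl_length (Injective_map_NoDup Hinj Hl) Hincl) as Hlen.
  rewrite length_map, length_seq in Hlen. lia.
Qed.

Lemma NoDup_bounded_cover (P : nat -> Prop) (B : nat) :
  (forall l, NoDup l -> (forall x, In x l -> P x) -> length l <= B) ->
  exists l, length l <= B /\ forall x, P x -> In x l.
Proof.
  intro H.
  assert (G : forall k, (exists l, NoDup l /\ (forall x, In x l -> P x) /\ length l = k) \/
                        (exists l, length l <= B /\ forall x, P x -> In x l)).
  { induction k as [|k IH].
    - left. exists nil. split; [constructor|]. split; [intros x []|reflexivity].
    - destruct IH as [[l [Hl [HP Hlen]]]|Hc]; [|right; auto].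
      destruct (classic (forall x, P x -> In x l)) as [Hall|Hn].
      + right. exists l. split; auto.
      + apply not_all_ex_not in Hn. destruct Hn as [x Hx]. apply imply_to_and in Hx.
        destruct Hx as [Px Hx]. left. exists (x :: l). split; [constructor; auto|]. split.
        * intros y [<-|Hy]; auto.
        * simpl. lia. }
  destruct (G (S B)) as [[l [Hl [HP Hlen]]]|Hc]; auto.
  specialize (H l Hl HP). lia.
Qed.

Lemma deficiency_free_W_bound (A : nat -> Prop) (a : nat -> nat) (ca : nat) (fc : nat -> nat)
  (HDW : forall e, (forall z, canon (fc e) z -> defined e z) ->
     exists z, canon (fc e) z /\ exists y, phi e z y /\ ~ chi A z y)
  (Ha : forall x, phi ca x (a x)) (Hinj : forall s t, a s = a t -> s = t)
  (HA : forall x, A x <-> exists t, a t = x)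
  e (He : forall x, W e x -> ~ deficiency a x) l (Hl : NoDup l) (HlW : forall s, In s l -> W e s) :
  length l <= fc (approx_code ca e).
Proof.
  apply Nat.nlt_ge. intro HF.
  destruct (injective_large_value a l _ Hinj Hl HF) as [s [Hs Has]].
  destruct (HDW (approx_code ca e)) as [z [Hz [y [Hy Hchi]]]].
  - intros z Hz. destruct (HlW s Hs) as [y Hy].
    apply (approx_code_total ca a Ha e s y); [exact Hy|]. apply canon_lt in Hz. lia.
  - exact (Hchi (approx_code_correct ca a Ha A HA e z y He Hy)).
Qed.

Theorem deficiency_effectively_simple (A : nat -> Prop) (a : nat -> nat) :
  DWEU A -> computable a -> (forall s t, a s = a t -> s = t) ->
  (forall x, A x <-> exists t, a t = x) -> effectively_simple (deficiency a).
Proof.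
  intros [_ [fc [Hfc HDW]]] [ca Ha] Hinj HA. split; [exact (re_deficiency ca a Ha)|].
  exists (fun e => fc (den (fun _ => false) (ESmn (encode (PApprox ca)) EId) e)). split.
  - apply computable_comp_den; auto.
  - intros e He. rewrite den_Smn, den_Id. apply NoDup_bounded_cover.
    exact (deficiency_free_W_bound A a ca fc HDW Ha Hinj HA e He).
Qed.

(** * Turing completeness *)

Section Reduction.

Variables (A : nat -> Prop) (eA : nat).
Hypothesis HeA : forall x, A x <-> W eA x.

Definition EHaltSelf : fexp := EHaltFlag (EFst @ EFst) (EFst @ EFst) ESnd.
Lemma den_HaltSelf o x z n : den o EHaltSelf (pair (pair x z) n) = halt_flag x x n.
Proof. unfold EHaltSelf. den_simpl. reflexivity. Qed.

Definition EStageAnswer : fexp :=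
  EIfEq (EHaltFlag (EConst eA) (ESnd @ EFst) ESnd) (EConst 0) (EConst 1) EZero.
Lemma den_StageAnswer o x z s :
  den o EStageAnswer (pair (pair x z) s) = if halt_flag eA z s =? 0 then 1 else 0.
Proof. unfold EStageAnswer. den_simpl. destruct (_ =? 0); reflexivity. Qed.

(* [stage_code x] is an index of the function psi_x of the proof idea. *)
Definition PStage : prog := PComp (compile EStageAnswer) (PSearch EHaltSelf).
Definition stage_code (x : nat) : nat := smn (encode PStage) x.

Lemma phi_stage_code x z y : phi (stage_code x) z y ->
  exists s, halt_flag x x s = 0 /\ y = (if halt_flag eA z s =? 0 then 1 else 0).
Proof.
  intro H. apply phi_smn, evalR_comp_inv in H. destruct H as [u [Hu Hy]].
  apply PSearch_sound in Hu. destruct Hu as [s [-> [Hs _]]].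
  apply evalR_compile_den in Hy. rewrite den_StageAnswer in Hy. rewrite den_HaltSelf in Hs.
  eauto.
Qed.

Lemma stage_code_total x z : K x -> defined (stage_code x) z.
Proof.
  intros [v Hv]. destruct (halt_flag_complete _ _ _ Hv) as [n Hn].
  destruct (PSearch_complete (fun _ => false) EHaltSelf (pair x z)) as [m [Hm _]].
  { exists n. rewrite den_HaltSelf. apply Hn. lia. }
  eexists. apply phi_smn. econstructor; [exact Hm|apply compile_correct].
Qed.

Variable fc : nat -> nat.
Hypothesis HDW : forall e, (forall z, canon (fc e) z -> defined e z) ->
  exists z, canon (fc e) z /\ exists y, phi e z y /\ ~ chi A z y.

(* Once every element of [A] in [fc (stage_code x)] has entered [A] by stage [t], membership of
   [x] in [K] is settled by stage [t]: otherwise [stage_code x] would compute [1_A] correctly on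
   all of [fc (stage_code x)]. *)
Lemma stage_settles_K x t :
  (forall z, canon (fc (stage_code x)) z -> A z -> halt_flag eA z t = 0) ->
  K x -> halt_flag x x t = 0.
Proof.
  intros Ht HK.
  destruct (HDW (stage_code x)) as [z [Hz [y [Hy Hchi]]]].
  { intros z _. apply stage_code_total, HK. }
  apply phi_stage_code in Hy. destruct Hy as [s [Hs ->]].
  destruct (Nat.eqb_spec (halt_flag eA z s) 0) as [E|E].
  - exfalso. apply Hchi. left. split; auto. apply HeA. eexists. apply halt_flag_sound, E.
  - assert (Az : A z) by (apply NNPP; intro Hn; apply Hchi; right; auto).
    specialize (Ht z Hz Az). destruct (le_lt_dec s t) as [Hst|Hts].
    + apply (halt_flag_mono x x s t Hs Hst).
    + exfalso. apply E. apply (halt_flag_mono eA z t s Ht). lia.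
Qed.

Variable cfc : nat.
Hypothesis Hcfc : forall x, phi cfc x (fc x).

Definition EStageOut : fexp := ERunOut (EConst cfc) (ESmn (encode PStage) EFst) ESnd.

Definition EStageHalt : fexp := EHaltFlag (EConst cfc) (ESmn (encode PStage) EFst) ESnd.
Lemma den_StageHalt o x N : den o EStageHalt (pair x N) = halt_flag cfc (stage_code x) N.
Proof. unfold EStageHalt. den_simpl. reflexivity. Qed.

Definition missed_bit (o : nat -> bool) (F t z : nat) : nat :=
  if bit F z =? 1 then (if o z then halt_flag eA z t else 0) else 0.

Definition EMissedSum : fexp :=
  ESum (EIfEq (EBit @ EPair (EStageOut @ EFst @ EFst) ESnd) (EConst 1)
          (EIfEq (EOrc @ ESnd) (EConst 1) (EHaltFlag (EConst eA) ESnd (ESnd @ EFst)) EZero) EZero)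
  @ EPair EId (EStageOut @ EFst).

Lemma den_MissedSum o x N t : den o EMissedSum (pair (pair x N) t) =
  sumto (missed_bit o (run_out cfc (stage_code x) N) t) (run_out cfc (stage_code x) N).
Proof.
  unfold EMissedSum, EStageOut. den_simpl. apply sumto_ext. intro z.
  unfold missed_bit. den_simpl. destruct (o z); reflexivity.
Qed.

Definition EKAnswer : fexp :=
  EIfEq (EHaltFlag (EFst @ EFst) (EFst @ EFst) ESnd) (EConst 0) (EConst 1) EZero.

(* Finds a step count [N] computing [F := fc (stage_code x)], then with the oracle the least
   stage [t] by which the elements of [A] in [F] have entered [A], and answers whether [x]
   enters [K] by stage [t]. *)
Definition reduction_prog : prog :=
  PComp (compile EKAnswer) (PComp (PSearch EMissedSum) (PSearch EStageHalt)).

Variable oA : nat -> bool.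
Hypothesis HoA : forall x, oA x = true <-> A x.

Lemma reduction_prog_eval x : exists t,
  evalR oA reduction_prog x (if halt_flag x x t =? 0 then 1 else 0) /\
  forall z, canon (fc (stage_code x)) z -> A z -> halt_flag eA z t = 0.
Proof.
  destruct (halt_flag_complete _ _ _ (Hcfc (stage_code x))) as [N0 HN0].
  destruct (PSearch_complete oA EStageHalt x) as [N [HN HzN]].
  { exists N0. rewrite den_StageHalt. apply HN0. lia. }
  rewrite den_StageHalt in HzN.
  pose proof (halt_flag_output _ _ _ _ (Hcfc (stage_code x)) HzN) as HF.
  set (F := fc (stage_code x)) in *.
  destruct (halt_flag_uniform (fun z => bit F z = 1 /\ A z) eA F) as [t0 Ht0].
  { intros z _ [_ Az]. apply HeA in Az. exact Az. }
  destruct (PSearch_complete oA EMissedSum (pair x N)) as [t [Ht Hzt]].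
  { exists t0. rewrite den_MissedSum, HF. apply sumto_zero. intros z Hz. unfold missed_bit.
    destruct (Nat.eqb_spec (bit F z) 1); [|reflexivity].
    destruct (oA z) eqn:Hoz; [|reflexivity]. apply Ht0; auto. split; auto. apply HoA, Hoz. }
  exists t. split.
  - econstructor; [econstructor; [exact HN|exact Ht]|].
    replace (if halt_flag x x t =? 0 then 1 else 0) with (den oA EKAnswer (pair (pair x N) t))
      by (unfold EKAnswer; den_simpl; destruct (_ =? 0); reflexivity).
    apply compile_correct.
  - intros z Hz Az. rewrite den_MissedSum, HF, sumto_zero in Hzt.
    specialize (Hzt z (canon_lt _ _ Hz)). unfold missed_bit in Hzt.
    rewrite (canon_bit _ _ Hz), (proj2 (HoA z) Az) in Hzt. exact Hzt.
Qed.

Lemma reduction_prog_correct x : exists y, evalR oA reduction_prog x y /\ chi K x y.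
Proof.
  destruct (reduction_prog_eval x) as [t [Hev Ht]].
  eexists. split; [exact Hev|]. unfold chi.
  destruct (Nat.eqb_spec (halt_flag x x t) 0) as [E|E].
  - left. split; auto. eexists. apply halt_flag_sound, E.
  - right. split; auto. intro HK. exact (E (stage_settles_K x t Ht HK)).
Qed.

End Reduction.

Theorem DWEU_Turing_complete (A : nat -> Prop) : DWEU A -> Treducible K A.
Proof.
  intros [[eA HeA] [fc [[cfc Hcfc] HDW]]].
  set (oA := fun x => if excluded_middle_informative (A x) then true else false).
  assert (HoA : forall x, oA x = true <-> A x).
  { intro x. unfold oA. destruct (excluded_middle_informative (A x)); split; auto; discriminate. }
  exists oA. split; [exact HoA|]. exists (encode (reduction_prog eA cfc)). intro x.
  destruct (reduction_prog_correct A eA HeA fc HDW cfc Hcfc oA HoA x) as [y [Hy Hchi]].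
  exists y. split; [apply phiO_enc, Hy|exact Hchi].
Qed.

Theorem mainTheorem3 :
  (forall (A : nat -> Prop) (a : nat -> nat),
      DWEU A ->
      computable a ->
      (forall s t, a s = a t -> s = t) ->
      (forall x, A x <-> exists t, a t = x) ->
      effectively_simple (deficiency a))
  /\
  (forall A : nat -> Prop, DWEU A -> Treducible K A).
Proof. split; [exact deficiency_effectively_simple|exact DWEU_Turing_complete]. Qed.
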